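(* In a positive, anchored hidden Markov model, under any (measurable) policy $g$, the restricted information chain $F|_R$ has at least one state of the form $\delta(x_i)$ (with $(x_i,y_i)$ an anchor pair for some observation process $i$) which is positive recurrent, i.e. whose expected return time is finite.
   Context: Model: $(X_t)$ is a time-homogeneous Markov chain on $S=\{1,\dots,n\}$ with transition matrix $T$; $O$ is a finite index set of observation processes with values in $V=\{1,\dots,m\}$ and observation matrices $M^{(i)}$, $M^{(i)}_{jk}=\mathbb P(Y^{(i)}_t=k\mid X_t=j)$. $\mathcal P(S)$ is the probability simplex in $\mathbb R^n$, $\delta(x)$ the point mass at $x$. A policy is a function $g:\mathcal P(S)\to O$, $A_i=g^{-1}\{i\}$. For $i\in O$, $y\in V$: $\alpha_{i,y}(z)=(zTM^{(i)})_y=\sum_{j,x}z_jT_{j,x}M^{(i)}_{x,y}$ and, when $\alpha_{i,y}(z)>0$, $r_{i,y}(z)=\frac{\sum_{x,j}M^{(i)}_{x,y}T_{j,x}z_j\delta(x)}{\sum_{x,j}M^{(i)}_{x,y}T_{j,x}z_j}$. Positive: all entries of $T$ strictly positive. Anchored: $(X_t)$ ergodic and for each $i\in O$ there is an anchor pair $(x_i,y_i)$ with $M^{(i)}_{x_i,y_i}>0$ and $M^{(i)}_{x,y_i}=0$ for $x\ne x_i$. Orbit $R_x$: $\delta(x)$ together with all points $r_{i_k,y_k}\circ\cdots\circ r_{i_1,y_1}(\delta(x))$ ($k\ge1$, arbitrary $i_j\in O,y_j\in V$) with each $\alpha_{i_{j+1},y_{j+1}}$ positive at the preceding point; $R=\bigcup_xR_x$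 (countable). The restricted information chain $F|_R$ is the Markov chain on $R$ that from $z$ moves to $r_{g(z),y}(z)$ with probability $\alpha_{g(z),y}(z)$, $y\in V$ (this is the information state chain, i.e. the posterior of the hidden state, restricted to $R$). *)

From HB Require Import structures.
From mathcomp Require Import all_boot all_order all_algebra.
From mathcomp Require Import all_classical all_reals all_analysis.
Set Implicit Arguments. Unset Strict Implicit. Unset Printing Implicit Defensive.
Import Order.TTheory GRing.Theory Num.Theory.
Local Open Scope ring_scope.

Section HMM.
Variables (R : realType) (n m : nat) (O : finType).
Variables (T : 'M[R]_n) (M : O -> 'M[R]_(n, m)).

Definition stochastic p q (A : 'M[R]_(p, q)) : Prop :=
  (forall i j, 0 <= A i j) /\ (forall i, \sum_j A i j = 1).

Definition delta (x : 'I_n) : 'rV[R]_n := \row_j (j == x)%:R.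

Definition alpha (i : O) (y : 'I_m) (z : 'rV[R]_n) : R := (z *m T *m M i) 0 y.

(* r_{i,y}(z) : Bayesian update; only used where alpha_{i,y}(z) > 0 *)
Definition rupd (i : O) (y : 'I_m) (z : 'rV[R]_n) : 'rV[R]_n :=
  (alpha i y z)^-1 *: \row_x (M i x y * (z *m T) 0 x).

Definition positive_hmm : Prop := forall j k, 0 < T j k.

Definition irreducible_chain : Prop :=
  forall j k, exists t : nat, (0 < t)%N /\ 0 < (T ^+ t) j k.

Definition aperiodic_chain : Prop :=
  forall j d : nat, forall (Hj : (j < n)%N),
    (forall t, (0 < t)%N -> 0 < (T ^+ t) (Ordinal Hj) (Ordinal Hj) -> (d %| t)%N) ->
    d = 1%N.

Definition ergodic_chain : Prop := irreducible_chain /\ aperiodic_chain.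

Definition anchor_pair (i : O) (x : 'I_n) (y : 'I_m) : Prop :=
  0 < M i x y /\ (forall x', x' != x -> M i x' y = 0).

Definition anchored_hmm : Prop :=
  ergodic_chain /\ forall i, exists x y, anchor_pair i x y.

Inductive orbit (x : 'I_n) : 'rV[R]_n -> Prop :=
| orbit_base : orbit x (delta x)
| orbit_step z i y : orbit x z -> 0 < alpha i y z -> orbit x (rupd i y z).

Definition inR (z : 'rV[R]_n) : Prop := exists x, orbit x z.

Variable g : 'rV[R]_n -> O.

(* Information chain F|_R: from w, move to rupd (g w) y w w.p. alpha (g w) y w.
   avoid z k w = P_w(Z_1 <> z, ..., Z_k <> z). *)
Fixpoint avoid (z : 'rV[R]_n) (k : nat) (w : 'rV[R]_n) : R :=
  match k with
  | 0 => 1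
  | k'.+1 => \sum_(y : 'I_m)
      alpha (g w) y w *
      (if rupd (g w) y w == z then 0 else avoid z k' (rupd (g w) y w))
  end.

(* expected return time E_z[tau_z] = sum_{k>=0} P_z(tau_z > k), in \bar R *)
Definition expected_return_time (z : 'rV[R]_n) : \bar R :=
  (\sum_(k <oo) (avoid z k z)%:E)%E.

Definition positive_recurrent (z : 'rV[R]_n) : Prop :=
  (expected_return_time z < +oo)%E.

End HMM.

From Pilot Require Import Defs.
From HB Require Import structures.
From mathcomp Require Import all_boot all_order all_algebra.
From mathcomp Require Import all_classical all_reals all_analysis.
From mathcomp Require Import lra.
Import Order.TTheory GRing.Theory Num.Theory.
Set Implicit Arguments. Unset Strict Implicit. Unset Printing Implicit Defensive.
Local Open Scope ring_scope.

(* Observing the anchor output y_j of the process j = g(w) forces the hidden state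
   to x_j, so the posterior jumps to delta(x_j); since T > 0 this happens with
   probability bounded below uniformly in w.  Among the finitely many anchor
   states choose delta(x_i) reaching a minimal set of anchor states: every anchor
   state it reaches leads back to it.  From any posterior reachable from
   delta(x_i), the chain therefore jumps to such an anchor state and then returns
   to delta(x_i) within a fixed number of steps with probability bounded below,
   so the return time has geometric tails and finite mean. *)

Lemma finite_pos_lower_bound (R : realDomainType) (I : finType) (f : I -> R) :
  exists2 c, 0 < c & forall i, 0 < f i -> c <= f i.
Proof.
exists (\big[Num.min/1]_(i | 0 < f i) f i).
  by elim/big_ind: _ => // x y; rewrite lt_min => -> ->.
by move=> i fi; rewrite (bigD1 i) //= ge_min lexx.
Qed.

Lemma exists_closed_class (I : finType) (r : I -> I -> Prop) (i0 : I) :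
  (forall i, r i i) -> (forall i j k, r i j -> r j k -> r i k) ->
  exists i, forall j, r i j -> r j i.
Proof.
move=> rr rt; pose succ i := [set j | `[< r i j >]].
have [i _ imin] := arg_minnP (fun i => #|succ i|) (erefl (xpredT i0)).
exists i => j rij; apply: contrapT => nrji.
suff : succ j \proper succ i by move/proper_card; rewrite ltnNge imin.
apply/properP; split.
  by apply/fintype.subsetP => k; rewrite !inE; exact: rt.
by exists i; rewrite !inE; [exact: rr | exact/asboolPn].
Qed.

Lemma nneseries_lty_of_block_contraction (R : realType) (s : nat -> R) (L : nat)
    (rho : R) :
  (forall k, 0 <= s k) -> (forall k, s k <= 1) -> rho < 1 ->
  (forall k, s (k + L)%N <= s k * rho) ->
  (\sum_(k <oo) (s k)%:E < +oo)%E.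
Proof.
move=> s0 s1 rho1 sL; pose S K := \sum_(0 <= k < K) s k.
have S_shift K : S (K + L)%N <= L%:R + rho * S K.
  elim: K => [|K IH].
    rewrite /S [X in _ * X]big_geq // mulr0 addr0 add0n.
    by rewrite -[X in X%:R](subn0 L) -sumr_const_nat; apply: ler_sum.
  rewrite addSn /S !big_nat_recr //= mulrDr addrA.
  by apply: lerD => //; rewrite mulrC.
have S_le K : S K <= L%:R / (1 - rho).
  have SKL : S K <= S (K + L)%N.
    rewrite /S [leRHS](big_cat_nat (n := K)) ?leq_addr //= lerDl.
    exact: sumr_ge0.
  rewrite ler_pdivlMr ?subr_gt0 //; have := S_shift K; lra.
apply: (@le_lt_trans _ _ (L%:R / (1 - rho))%:E); last exact: ltry.
apply: lime_le; first by apply: is_cvg_nneseries => k _ _; rewrite lee_fin.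
by apply: nearW => K; rewrite sumEFin lee_fin; exact: S_le.
Qed.

Section InformationChain.
Variables (R : realType) (n m : nat) (O : finType).
Variables (T : 'M[R]_n) (M : O -> 'M[R]_(n, m)) (g : 'rV[R]_n -> O).
Hypothesis sT : stochastic T.
Hypothesis sM : forall i, stochastic (M i).

Local Notation alpha := (Defs.alpha T M).
Local Notation rupd := (Defs.rupd T M).
Local Notation avoid := (Defs.avoid T M g).

Definition prob_vec (w : 'rV[R]_n) := (forall j, 0 <= w 0 j) /\ \sum_j w 0 j = 1.

Lemma delta_prob (x : 'I_n) : prob_vec (delta R x).
Proof.
split=> [j|]; first by rewrite mxE ler0n.
by rewrite (bigD1 x) //= big1 ?addr0 => [|j /negbTE jx]; rewrite mxE ?eqxx ?jx.
Qed.

Lemma mulmxT_ge0 (w : 'rV[R]_n) x : (forall j, 0 <= w 0 j) -> 0 <= (w *m T) 0 x.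
Proof.
move=> w0; rewrite mxE; apply: sumr_ge0 => k _.
by apply: mulr_ge0 => //; case: sT.
Qed.

Lemma alphaE i y w : alpha i y w = \sum_x M i x y * (w *m T) 0 x.
Proof. by rewrite /alpha mxE; apply: eq_bigr => x _; rewrite mulrC. Qed.

Lemma alpha_ge0 i y w : prob_vec w -> 0 <= alpha i y w.
Proof.
case=> w0 _; rewrite alphaE; apply: sumr_ge0 => x _.
by apply: mulr_ge0; [case: (sM i) | exact: mulmxT_ge0].
Qed.

Lemma sum_alpha i w : prob_vec w -> \sum_y alpha i y w = 1.
Proof.
case=> _ w1; rewrite -w1 /alpha.
under eq_bigr do rewrite mxE.
rewrite exchange_big /=.
under eq_bigr do rewrite -mulr_sumr (proj2 (sM i)) mulr1 mxE.
rewrite exchange_big /=; apply: eq_bigr => j _.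
by rewrite -mulr_sumr (proj2 sT) mulr1.
Qed.

Lemma rupd_prob i y w : prob_vec w -> 0 < alpha i y w -> prob_vec (rupd i y w).
Proof.
move=> pw a0; split=> [j|].
  rewrite /rupd 2!mxE; apply: mulr_ge0; first by rewrite invr_ge0 ltW.
  by apply: mulr_ge0; [case: (sM i) | exact: mulmxT_ge0 _ (proj1 pw)].
under eq_bigr do rewrite /rupd 2!mxE.
by rewrite -mulr_sumr -alphaE mulVf ?gt_eqF.
Qed.

(* A transition of probability zero leads outside the simplex, but has weight zero. *)
Lemma ler_wpM2l_alpha i y w a b : prob_vec w ->
  (0 < alpha i y w -> prob_vec (rupd i y w) -> a <= b) ->
  alpha i y w * a <= alpha i y w * b.
Proof.
move=> pw ab; have := alpha_ge0 i y pw; rewrite le_eqVlt => /predU1P[<-|a0].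
  by rewrite !mul0r.
by apply: ler_wpM2l; [exact: ltW | exact: ab a0 (rupd_prob pw a0)].
Qed.

(* Unlike [avoid], [miss] also counts time 0: the chain started at [w] stays off [z]
   at times 0, ..., k. *)
Definition miss (z : 'rV[R]_n) k w := if w == z then 0 else avoid z k w.

Lemma avoidS z k w :
  avoid z k.+1 w = \sum_y alpha (g w) y w * miss z k (rupd (g w) y w).
Proof. by []. Qed.

Lemma avoid_ge0 z k w : prob_vec w -> 0 <= avoid z k w.
Proof.
elim: k w => [|k IH] w pw //; rewrite avoidS; apply: sumr_ge0 => y _.
rewrite -[leLHS](mulr0 (alpha (g w) y w)); apply: ler_wpM2l_alpha => // _ pw'.
by rewrite /miss; case: ifP => // _; exact: IH.
Qed.

Lemma avoid_le1 z k w : prob_vec w -> avoid z k w <= 1.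
Proof.
elim: k w => [|k IH] w pw //; rewrite avoidS -(sum_alpha (g w) pw).
apply: ler_sum => y _; rewrite -[leRHS]mulr1; apply: ler_wpM2l_alpha => // _ pw'.
by rewrite /miss; case: ifP => // _; exact: IH.
Qed.

Lemma miss_le_avoid z k w : prob_vec w -> miss z k w <= avoid z k w.
Proof. by move=> pw; rewrite /miss; case: ifP => // _; exact: avoid_ge0. Qed.

Lemma avoid_antitone z k k' w : prob_vec w -> (k <= k')%N ->
  avoid z k' w <= avoid z k w.
Proof.
move=> + /subnK <-; elim: (k' - k)%N w => [//|d IH] w pw.
apply: le_trans (IH w pw); rewrite addSn.
elim: (d + k)%N w pw => [|l IHl] w pw; first exact: avoid_le1.
rewrite (avoidS _ l.+1) avoidS; apply: ler_sum => y _.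
apply: ler_wpM2l_alpha => // _ pw'.
by rewrite /miss; case: ifP => // _; exact: IHl.
Qed.

Lemma miss_antitone z k k' w : prob_vec w -> (k <= k')%N ->
  miss z k' w <= miss z k w.
Proof. by move=> pw kk'; rewrite /miss; case: ifP => // _; exact: avoid_antitone. Qed.

Inductive reach : 'rV[R]_n -> 'rV[R]_n -> Prop :=
| reach_refl w : reach w w
| reach_step w y z :
    0 < alpha (g w) y w -> reach (rupd (g w) y w) z -> reach w z.

Lemma reach_trans u v w : reach u v -> reach v w -> reach u w.
Proof. by elim=> // u' y z ha _ IH /IH; apply: reach_step. Qed.

Lemma reach_rcons u w y : reach u w -> 0 < alpha (g w) y w ->
  reach u (rupd (g w) y w).
Proof.
by move=> uw a0; apply: reach_trans uw _; apply: reach_step a0 (reach_refl _).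
Qed.

Lemma reach_prob u w : prob_vec u -> reach u w -> prob_vec w.
Proof. by move=> + uw; elim: uw => // u' y z a0 _ IH pu'; apply/IH/rupd_prob. Qed.

(* Markov property: avoiding [z] for [k + l] steps is avoiding it for [k] steps,
   and then for [l] more steps from a state that is still in [S]. *)
Lemma avoid_addn_le (S : 'rV[R]_n -> Prop) z l B :
  (forall w y, S w -> 0 < alpha (g w) y w -> S (rupd (g w) y w)) ->
  (forall w, S w -> avoid z l w <= B) ->
  forall k w, S w -> prob_vec w -> avoid z (k + l) w <= avoid z k w * B.
Proof.
move=> Sstep SB; elim=> [|k IH] w Sw pw; first by rewrite add0n mul1r SB.
rewrite addSn !avoidS mulr_suml; apply: ler_sum => y _.
rewrite -mulrA; apply: ler_wpM2l_alpha => // a0 pw'.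
by rewrite /miss; case: ifP => _; [rewrite mul0r | apply: IH => //; exact: Sstep].
Qed.

Lemma avoid_lt1 z k w y : prob_vec w -> 0 < alpha (g w) y w ->
  miss z k (rupd (g w) y w) < 1 -> avoid z k.+1 w < 1.
Proof.
move=> pw a0 miss1; rewrite avoidS -(sum_alpha (g w) pw).
rewrite (bigD1 y) //= [ltRHS](bigD1 y) //=; apply: ltr_leD.
  by rewrite -[ltRHS]mulr1 ltr_pM2l.
apply: ler_sum => y' _; rewrite -[leRHS]mulr1; apply: ler_wpM2l_alpha => // _ pw'.
exact: le_trans (miss_le_avoid _ _ pw') (avoid_le1 _ _ pw').
Qed.

Lemma reach_miss_lt1 w z : prob_vec w -> reach w z -> exists k, miss z k w < 1.
Proof.
move=> + wz; elim: wz => [w' _|w' y z' a0 _ IH pw].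
  by exists 0%N; rewrite /miss eqxx.
have [k lt1] := IH (rupd_prob pw a0); exists k.+1.
exact: le_lt_trans (miss_le_avoid _ _ pw) (avoid_lt1 pw a0 lt1).
Qed.

Lemma alpha_anchor j x y w : anchor_pair M j x y ->
  alpha j y w = M j x y * (w *m T) 0 x.
Proof.
case=> _ h0; rewrite alphaE (bigD1 x) //= big1 ?addr0 // => x' /h0->.
by rewrite mul0r.
Qed.

Lemma rupd_anchor j x y w : anchor_pair M j x y -> 0 < alpha j y w ->
  rupd j y w = delta R x.
Proof.
move=> axy a0; have [_ h0] := axy.
apply/matrixP => i k; rewrite [i]ord1 /rupd /delta mxE [X in _ * X]mxE [RHS]mxE.
have [->|/h0->] := eqVneq k x; last by rewrite mul0r mulr0.
by rewrite -(alpha_anchor _ axy) mulVf ?gt_eqF.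
Qed.

Lemma alpha_anchor_ge j x y w c : anchor_pair M j x y -> prob_vec w ->
  (forall k, c <= M j x y * T k x) -> c <= alpha j y w.
Proof.
move=> axy [w0 w1] cle; rewrite (alpha_anchor _ axy) mxE mulr_sumr.
rewrite -[c]mul1r -w1 mulr_suml; apply: ler_sum => k _.
by rewrite mulrCA ler_wpM2l.
Qed.

Section AnchoredRecurrence.
Hypothesis posT : positive_hmm T.
Variables (xa : O -> 'I_n) (ya : O -> 'I_m).
Hypothesis anchor : forall j, anchor_pair M j (xa j) (ya j).

Local Notation a j := (delta R (xa j)).

Lemma anchor_alpha_lower_bound :
  exists2 c, 0 < c & forall j w, prob_vec w -> c <= alpha j (ya j) w.
Proof.
pose f (p : O * 'I_n) := M p.1 (xa p.1) (ya p.1) * T p.2 (xa p.1).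
have [c c0 cf] := finite_pos_lower_bound f.
exists c => // j w pw; apply: (alpha_anchor_ge (anchor j) pw) => k.
by apply: (cf (j, k)); rewrite mulr_gt0 //; case: (anchor j).
Qed.

Variable i : O.
Hypothesis closed : forall j, reach (a i) (a j) -> reach (a j) (a i).

Lemma anchor_hitting_lower_bound : exists N, exists2 p, 0 < p &
  forall j, reach (a i) (a j) -> miss (a i) N (a j) <= 1 - p.
Proof.
have hit j : exists t, reach (a i) (a j) -> miss (a i) t (a j) < 1.
  have [ij|nij] := pselect (reach (a i) (a j)); last by exists 0%N.
  by have [t lt1] := reach_miss_lt1 (delta_prob (xa j)) (closed ij); exists t.
have [t ht] := choice hit; pose N := (\max_j t j)%N.
have [p p0 pf] := finite_pos_lower_bound (fun j => 1 - miss (a i) N (a j)).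
exists N, p => // j ij; suff : p <= 1 - miss (a i) N (a j) by lra.
apply: pf; rewrite subr_gt0; apply: le_lt_trans (ht j ij).
by apply: miss_antitone (delta_prob _) _ => //; exact: leq_bigmax.
Qed.

Lemma avoid_contraction : exists L, exists2 rho, rho < 1 &
  forall w, reach (a i) w -> avoid (a i) L w <= rho.
Proof.
have [c c0 cle] := anchor_alpha_lower_bound.
have [N [p p0 miss_le]] := anchor_hitting_lower_bound.
exists N.+1, (1 - c * p); first by have := mulr_gt0 c0 p0; lra.
move=> w iw; have pw := reach_prob (delta_prob (xa i)) iw.
set j := g w; set a0 := alpha j (ya j) w.
have a0c : c <= a0 := cle j w pw.
have jump : rupd j (ya j) w = a j.
  by apply: rupd_anchor (anchor j) _; exact: lt_le_trans a0c.
have ij : reach (a i) (a j).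
  by rewrite -jump; apply: reach_rcons iw _; exact: lt_le_trans a0c.
have rest : \sum_(y | y != ya j) alpha j y w * miss (a i) N (rupd j y w) <= 1 - a0.
  rewrite -(sum_alpha j pw) [X in _ <= X - _](bigD1 (ya j)) //= -/a0.
  rewrite [leRHS]addrC addKr.
  apply: ler_sum => y _; rewrite -[leRHS]mulr1; apply: ler_wpM2l_alpha => // _ pw'.
  exact: le_trans (miss_le_avoid _ _ pw') (avoid_le1 _ _ pw').
rewrite avoidS (bigD1 (ya j)) //= -/j -/a0 jump.
have := ler_wpM2l (alpha_ge0 j (ya j) pw) (miss_le j ij).
have := ler_wpM2r (ltW p0) a0c; rewrite -/a0; lra.
Qed.

Lemma anchor_positive_recurrent : positive_recurrent T M g (a i).
Proof.
have [L [rho rho1 avoid_le]] := avoid_contraction.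
have pz := delta_prob (xa i).
apply: (nneseries_lty_of_block_contraction (L := L) (rho := rho)) => //.
- by move=> k; exact: avoid_ge0.
- by move=> k; exact: avoid_le1.
- move=> k; apply: (avoid_addn_le (S := reach (a i))) => //.
    by move=> w y; exact: reach_rcons.
  exact: reach_refl.
Qed.

End AnchoredRecurrence.

End InformationChain.

Theorem proposition2p22 (R : realType) (n m : nat) (O : finType)
  (T : 'M[R]_n) (M : O -> 'M[R]_(n, m)) (g : 'rV[R]_n -> O) :
  stochastic T -> (forall i, stochastic (M i)) ->
  positive_hmm T -> anchored_hmm T M ->
  exists (i : O) (x : 'I_n) (y : 'I_m),
    anchor_pair M i x y /\ inR T M (delta R x) /\
    positive_recurrent T M g (delta R x).
Proof.
move=> sT sM posT [_ anchors].
have [xa /choice[ya anchor]] := choice anchors.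
pose r j k := reach T M g (delta R (xa j)) (delta R (xa k)).
have [i closed] : exists i, forall j, r i j -> r j i.
  apply: (exists_closed_class (g 0)) => [j|j k l]; first exact: reach_refl.
  exact: reach_trans.
exists i, (xa i), (ya i); split; first exact: anchor.
split; first by exists (xa i); exact: orbit_base.
exact: anchor_positive_recurrent.
Qed.
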